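(* For every $\mathsf{SKS}$ derivation $\Phi$ there exists an $\mathsf{SKS}$ derivation with the same premiss and conclusion as $\Phi$ whose associated atomic flow is cycle-free.
   Context: Formulae are built from the units $\mathsf f$ and $\mathsf t$, atoms, disjunction $[\alpha\vee\beta]$ and conjunction $(\alpha\wedge\beta)$; on atoms there is an involution $a\mapsto\bar a$ with $\bar a\neq a$. An inference step of a rule $\alpha/\beta$ rewrites $\xi\{\alpha\}$ into $\xi\{\beta\}$ for an arbitrary context (formula with a hole) $\xi$. A derivation from $\alpha$ (premiss) to $\beta$ (conclusion) is a finite chain of steps from $\alpha$ to $\beta$. System $\mathsf{SKS}$: interaction $\mathsf t/[a\vee\bar a]$; weakening $\mathsf f/a$; contraction $[a\vee a]/a$; cut $(a\wedge\bar a)/\mathsf f$; coweakening $a/\mathsf t$; cocontraction $a/(a\wedge a)$; switch $(\alpha\wedge[\beta\vee\gamma])/[(\alpha\wedge\beta)\vee\gamma]$; medial $[(\alpha\wedge\beta)\vee(\gamma\wedge\delta)]/([\alpha\vee\gamma]\wedge[\beta\vee\delta])$; and $\gamma/\delta$ whenever $\gamma=\delta$ is (either direction of) an instance of commutativity or associativity of $\vee,\wedge$, $[\alpha\vee\mathsf f]=\alpha$, $(\alpha\wedge\mathsf t)=\alpha$, $[\mathsf t\vee\mathsf t]=\mathsf t$, $(\mathsf f\wedge\mathsf f)=\mathsf f$. The atomic flow of an $\mathsf{SKS}$ derivation is a finite directed graph with vertices labelled interaction, cut, weakening, coweakening, contraction or cocontraction, and edges that may dangle at the top ($up=\top$) or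 bottom ($lo=\bot$): each atom occurrence is mapped to an edge by tracing occurrences through steps (occurrences in contexts and in the instantiated subformulae of switch, medial, $=$ keep their edge); each step of an atomic rule gives a vertex with that label whose upper edges ($lo(\epsilon)=\nu$) are the redex occurrences in the step's premiss and whose lower edges ($up(\epsilon)=\nu$) are those in its conclusion; occurrences in the premiss (conclusion) of the derivation have $up=\top$ ($lo=\bot$). A path from $\nu$ to $\nu'$ is a sequence of edges $\epsilon_1,\dots,\epsilon_h$ with $lo(\epsilon_i)=up(\epsilon_{i+1})$, $up(\epsilon_1)=\nu$, $lo(\epsilon_h)=\nu'$; its reversal is a path from $\nu'$ to $\nu$. An $\mathsf{ai}$-path from $\nu$ to $\nu'$ is either a path from $\nu$ to $\nu'$ or a sequence $\epsilon_1,\dots,\epsilon_k,\epsilon_{k+1},\dots,\epsilon_h$ with $\epsilon_k\neq\epsilon_{k+1}$ such that, for some interaction or cut vertex $\nu''$, $\epsilon_1,\dots,\epsilon_k$ is an $\mathsf{ai}$-path from $\nu$ to $\nu''$ and $\epsilon_{k+1},\dots,\epsilon_h$ is an $\mathsf{ai}$-path from $\nu''$ to $\nu'$. An $\mathsf{ai}$-cycle is an $\mathsf{ai}$-path from a vertex to itself in which no edge appears twice. A flow is cycle-free if it has no $\mathsf{ai}$-cycle. *)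

From mathcomp Require Import all_boot.
Set Implicit Arguments. Unset Strict Implicit. Unset Printing Implicit Defensive.

Inductive formula (X : Type) : Type :=
| FF : formula X
| FT : formula X
| FAt : X -> formula X
| FOr : formula X -> formula X -> formula X
| FAnd : formula X -> formula X -> formula X.
Arguments FF {X}. Arguments FT {X}.

Fixpoint fmap (X Y : Type) (f : X -> Y) (p : formula X) : formula Y :=
  match p with
  | FF => FF | FT => FT | FAt x => FAt (f x)
  | FOr p q => FOr (fmap f p) (fmap f q)
  | FAnd p q => FAnd (fmap f p) (fmap f q)
  end.

Fixpoint leaves (X : Type) (p : formula X) : seq X :=
  match p with
  | FF | FT => [::] | FAt x => [:: x]
  | FOr p q | FAnd p q => leaves p ++ leaves q
  end.

Inductive ctx (X : Type) : Type :=
| Hole : ctx X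
| COrL : ctx X -> formula X -> ctx X
| COrR : formula X -> ctx X -> ctx X
| CAndL : ctx X -> formula X -> ctx X
| CAndR : formula X -> ctx X -> ctx X.
Arguments Hole {X}.

Fixpoint plug (X : Type) (c : ctx X) (p : formula X) : formula X :=
  match c with
  | Hole => p
  | COrL c q => FOr (plug c p) q
  | COrR q c => FOr q (plug c p)
  | CAndL c q => FAnd (plug c p) q
  | CAndR q c => FAnd q (plug c p)
  end.

Inductive eqn (X : Type) : formula X -> formula X -> Prop :=
| eq_comm_or a b : eqn (FOr a b) (FOr b a)
| eq_comm_and a b : eqn (FAnd a b) (FAnd b a)
| eq_assoc_or a b c : eqn (FOr (FOr a b) c) (FOr a (FOr b c))
| eq_assoc_and a b c : eqn (FAnd (FAnd a b) c) (FAnd a (FAnd b c))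
| eq_unit_or a : eqn (FOr a FF) a
| eq_unit_and a : eqn (FAnd a FT) a
| eq_tt : eqn (FOr FT FT) FT
| eq_ff : eqn (FAnd FF FF) FF.

Inductive srule (X : Type) : formula X -> formula X -> Prop :=
| sr_switch a b c : srule (FAnd a (FOr b c)) (FOr (FAnd a b) c)
| sr_medial a b c d :
    srule (FOr (FAnd a b) (FAnd c d)) (FAnd (FOr a c) (FOr b d))
| sr_eq_lr a b : eqn a b -> srule a b
| sr_eq_rl a b : eqn a b -> srule b a.

(* Edges of the atomic flow: (0, k) = k-th atom occurrence of the premiss
   (up = top);  (i.+1, k) = k-th lower edge of the vertex created by step i. *)
Definition edge := (nat * nat)%type.
Definition born (i k : nat) : edge := (i.+1, k).

Inductive vlabel : Type :=
| VInt | VCut | VWeak | VCoweak | VContr | VCocontr.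

Definition lformula (A : Type) := formula (A * edge).

(* atomic rules applied at step i; last two indices: vertex label, upper edges *)
Inductive arule (A : Type) (bar : A -> A) (i : nat) :
  lformula A -> lformula A -> vlabel -> seq edge -> Prop :=
| ar_int a : arule bar i FT (FOr (FAt (a, born i 0)) (FAt (bar a, born i 1))) VInt [::]
| ar_weak a : arule bar i FF (FAt (a, born i 0)) VWeak [::]
| ar_contr a e1 e2 :
    arule bar i (FOr (FAt (a, e1)) (FAt (a, e2))) (FAt (a, born i 0)) VContr [:: e1; e2]
| ar_cut a e1 e2 :
    arule bar i (FAnd (FAt (a, e1)) (FAt (bar a, e2))) FF VCut [:: e1; e2]
| ar_coweak a e : arule bar i (FAt (a, e)) FT VCoweak [:: e]
| ar_cocontr a e :
    arule bar i (FAt (a, e)) (FAnd (FAt (a, born i 0)) (FAt (a, born i 1))) VCocontr [:: e].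

(* one inference step (rule in a context), at position i of the derivation;
   None = structural step, Some (l, ups) = atomic step giving a vertex *)
Inductive lstep (A : Type) (bar : A -> A) (i : nat) :
  lformula A -> lformula A -> option (vlabel * seq edge) -> Prop :=
| ls_struct (c : ctx (A * edge)) a b :
    srule a b -> lstep bar i (plug c a) (plug c b) None
| ls_atomic (c : ctx (A * edge)) a b l ups :
    arule bar i a b l ups -> lstep bar i (plug c a) (plug c b) (Some (l, ups)).

Record derivation (A : Type) := Deriv {
  dforms : seq (lformula A);
  dinfo : seq (option (vlabel * seq edge)) }.

Definition erase (A : Type) (p : lformula A) : formula A := fmap fst p.

Definition is_derivation (A : Type) (bar : A -> A) (D : derivation A)
    (x y : formula A) : Prop :=
  size (dforms D) = (size (dinfo D)).+1 /\
  map snd (leaves (head FF (dforms D)))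
    = [seq (0, k) | k <- iota 0 (size (leaves (head FF (dforms D))))] /\
  (forall i, i < size (dinfo D) ->
     lstep bar i (nth FF (dforms D) i) (nth FF (dforms D) i.+1) (nth None (dinfo D) i)) /\
  erase (head FF (dforms D)) = x /\
  erase (last FF (dforms D)) = y.

Inductive node : Type := NTop | NBot | NV of nat.

Definition edges (A : Type) (D : derivation A) : seq edge :=
  flatten [seq map snd (leaves p) | p <- dforms D].

Definition up (e : edge) : node :=
  match e.1 with 0 => NTop | i.+1 => NV i end.

Definition consumes (e : edge) (o : option (vlabel * seq edge)) : bool :=
  if o is Some (_, ups) then e \in ups else false.

Definition lo (A : Type) (D : derivation A) (e : edge) : node :=
  let j := find (consumes e) (dinfo D) in
  if j < size (dinfo D) then NV j else NBot.

Definition ai_vertex (A : Type) (D : derivation A) (v : node) : Prop :=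
  match v with
  | NV j => nth None (dinfo D) j = Some (VInt, [::]) \/
            exists ups, nth None (dinfo D) j = Some (VCut, ups)
  | _ => False
  end.

Inductive dpath (A : Type) (D : derivation A) : node -> seq edge -> node -> Prop :=
| dp_one e : e \in edges D -> dpath D (up e) [:: e] (lo D e)
| dp_cons e s v' : e \in edges D -> dpath D (lo D e) s v' -> dpath D (up e) (e :: s) v'.

Inductive aipath (A : Type) (D : derivation A) : node -> seq edge -> node -> Prop :=
| ai_path v s v' : dpath D v s v' -> aipath D v s v'
| ai_rev v s v' : dpath D v' s v -> aipath D v (rev s) v'
| ai_cat v s1 e1 w e2 s2 v' :
    aipath D v (rcons s1 e1) w -> aipath D w (e2 :: s2) v' ->
    ai_vertex D w -> e1 <> e2 ->
    aipath D v (rcons s1 e1 ++ e2 :: s2) v'.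

Definition ai_cycle (A : Type) (D : derivation A) (s : seq edge) : Prop :=
  exists n, aipath D (NV n) s (NV n) /\ uniq s.

Definition cycle_free (A : Type) (D : derivation A) : Prop :=
  forall s, ~ ai_cycle D s.

(* By soundness, every valuation respecting the involution that satisfies the
   premiss satisfies the conclusion.  Such a valid implication can be derived
   again in two phases: bring the premiss to disjunctive normal form and delete
   its inconsistent clauses with cuts, then derive the conclusion from every
   remaining consistent clause, splitting on undecided atoms with interactions.
   In the flow of this derivation all cuts come before all interactions.  Along
   an ai-path, keep track of the direction of travel and of the atom carried by
   the current edge: the atom becomes its dual exactly when the direction turns,
   which happens upwards at cuts and downwards at interactions.  A path that
   returns to its starting vertex must leave and re-enter it in opposite
   directions along edges carrying dual atoms, so that vertex is an interaction
   or a cut; but the turns of the path force an interaction reached this way to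
   lie in the first phase and a cut in the second. *)

From Pilot Require Import Defs.
From mathcomp Require Import all_boot zify.
From Stdlib Require Import Classical ClassicalEpsilon FunctionalExtensionality PropExtensionality.
From Stdlib Require List.

Set Implicit Arguments. Unset Strict Implicit. Unset Printing Implicit Defensive.
Set Contextual Implicit. Set Maximal Implicit Insertion.

Section Derivability.
Variables (A : Type) (bar : A -> A).

Definition step_info := option (vlabel * seq edge).

Inductive chain : nat -> lformula A -> lformula A -> seq (lformula A) -> seq step_info -> Prop :=
| chain_nil i p : chain i p p [:: p] [::]
| chain_cons i p q r fs l o :
    lstep bar i p q o -> chain i.+1 q r fs l -> chain i p r (p :: fs) (o :: l).

Definition allowed (ok : vlabel -> bool) (o : step_info) : bool :=
  if o is Some (l, _) then ok l else true.

(* Quantifying over every labelling of [x] and every starting position is what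
   lets derivations be composed and put into contexts. *)
Inductive derivable (ok : vlabel -> bool) (x y : formula A) : Prop :=
  Derivable of forall i (p : lformula A), erase p = x ->
    exists q fs l, [/\ chain i p q fs l, erase q = y & all (allowed ok) l].

Lemma chain_head i p r fs l : chain i p r fs l -> fs = p :: behead fs.
Proof. by case. Qed.

Lemma chain_cat i p q r fs1 l1 fs2 l2 :
  chain i p q fs1 l1 -> chain (i + size l1) q r fs2 l2 ->
  chain i p r (fs1 ++ behead fs2) (l1 ++ l2).
Proof.
elim=> {i p q fs1 l1} [i p|i p q r' fs l o Hst _ IH] /= Ch.
  by rewrite addn0 in Ch; rewrite -(chain_head Ch).
by apply: chain_cons Hst _; apply: IH; rewrite addSnnS.
Qed.

Lemma chain_spec i p r fs l : chain i p r fs l ->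
  [/\ size fs = (size l).+1, head FF fs = p, last FF fs = r &
      forall k, k < size l -> lstep bar (i + k) (nth FF fs k) (nth FF fs k.+1) (nth None l k)].
Proof.
elim=> {i p r fs l} [i p|i p q r fs l o Hst _ [Hsz Hhd Hlt IH]] //.
split=> //=; first by rewrite Hsz.
  by case: fs Hsz Hlt {IH Hhd}.
case=> [|k] Hk /=; first by rewrite addn0 nth0 Hhd.
by rewrite addnS -addSn; apply: IH.
Qed.

Fixpoint ccomp (X : Type) (c c' : ctx X) : ctx X :=
  match c with
  | Hole => c'
  | COrL c q => COrL (ccomp c c') q
  | COrR q c => COrR q (ccomp c c')
  | CAndL c q => CAndL (ccomp c c') q
  | CAndR q c => CAndR q (ccomp c c')
  end.

Lemma plug_ccomp (X : Type) (c c' : ctx X) p : plug c (plug c' p) = plug (ccomp c c') p.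
Proof. by elim: c => //= [c IH q|q c IH|c IH q|q c IH]; rewrite IH. Qed.

Lemma lstep_plug c i a b o : lstep bar i a b o -> lstep bar i (plug c a) (plug c b) o.
Proof. by case=> [c' a' b' S|c' a' b' l ups R]; rewrite !plug_ccomp; constructor. Qed.

Lemma chain_plug c i p q fs l :
  chain i p q fs l -> chain i (plug c p) (plug c q) (map (plug c) fs) l.
Proof.
elim=> {i p q fs l} [i p|i p q r fs l o Hst _ IH] /=; first exact: chain_nil.
exact: chain_cons (lstep_plug Hst) IH.
Qed.

Lemma erase_FAnd (p : lformula A) x z : erase p = FAnd x z ->
  exists p1 p2, [/\ p = FAnd p1 p2, erase p1 = x & erase p2 = z].
Proof. by case: p => //= p1 p2 [<- <-]; exists p1, p2. Qed.

Lemma erase_FOr (p : lformula A) x z : erase p = FOr x z ->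
  exists p1 p2, [/\ p = FOr p1 p2, erase p1 = x & erase p2 = z].
Proof. by case: p => //= p1 p2 [<- <-]; exists p1, p2. Qed.

Lemma erase_FAt (p : lformula A) a : erase p = FAt a -> exists e, p = FAt (a, e).
Proof. by case: p => //= -[a' e] [<-]; exists e. Qed.

Lemma erase_FF (p : lformula A) : erase p = FF -> p = FF.
Proof. by case: p. Qed.

Lemma erase_FT (p : lformula A) : erase p = FT -> p = FT.
Proof. by case: p. Qed.

Variable ok : vlabel -> bool.
Local Notation D := (derivable ok).

Lemma der_refl x : D x x.
Proof. by constructor=> i p Hp; exists p, [:: p], [::]; split=> //; apply: chain_nil. Qed.

Lemma der_trans x y z : D x y -> D y z -> D x z.
Proof.
move=> [Dxy] [Dyz]; constructor=> i p Hp.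
have [q [fs1 [l1 [Ch1 Hq O1]]]] := Dxy i p Hp.
have [r [fs2 [l2 [Ch2 Hr O2]]]] := Dyz (i + size l1) q Hq.
exists r, (fs1 ++ behead fs2), (l1 ++ l2).
by rewrite all_cat O1 O2; split=> //; apply: chain_cat Ch1 Ch2.
Qed.

Lemma der_in_ctx x y c i p : D x y -> erase p = x ->
  exists q fs l, [/\ chain i (plug c p) (plug c q) fs l, erase q = y & all (allowed ok) l].
Proof.
move=> [Dxy] Hp; have [q [fs [l [Ch Hq O]]]] := Dxy i p Hp.
by exists q, (map (plug c) fs), l; split=> //; apply: chain_plug.
Qed.

Lemma der_andl x x' z : D x x' -> D (FAnd x z) (FAnd x' z).
Proof.
move=> Dx; constructor=> i p /erase_FAnd [p1 [p2 [-> H1 H2]]].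
have [q [fs [l [Ch Hq O]]]] := der_in_ctx (c := CAndL Hole p2) (i := i) Dx H1.
by exists (FAnd q p2), fs, l; rewrite /= -H2 -Hq.
Qed.

Lemma der_andr x x' z : D x x' -> D (FAnd z x) (FAnd z x').
Proof.
move=> Dx; constructor=> i p /erase_FAnd [p1 [p2 [-> H1 H2]]].
have [q [fs [l [Ch Hq O]]]] := der_in_ctx (c := CAndR p1 Hole) (i := i) Dx H2.
by exists (FAnd p1 q), fs, l; rewrite /= -H1 -Hq.
Qed.

Lemma der_orl x x' z : D x x' -> D (FOr x z) (FOr x' z).
Proof.
move=> Dx; constructor=> i p /erase_FOr [p1 [p2 [-> H1 H2]]].
have [q [fs [l [Ch Hq O]]]] := der_in_ctx (c := COrL Hole p2) (i := i) Dx H1.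
by exists (FOr q p2), fs, l; rewrite /= -H2 -Hq.
Qed.

Lemma der_orr x x' z : D x x' -> D (FOr z x) (FOr z x').
Proof.
move=> Dx; constructor=> i p /erase_FOr [p1 [p2 [-> H1 H2]]].
have [q [fs [l [Ch Hq O]]]] := der_in_ctx (c := COrR p1 Hole) (i := i) Dx H2.
by exists (FOr p1 q), fs, l; rewrite /= -H1 -Hq.
Qed.

Lemma der_and x x' z z' : D x x' -> D z z' -> D (FAnd x z) (FAnd x' z').
Proof. by move=> Dx Dz; apply: der_trans (der_andl Dx) (der_andr Dz). Qed.

Lemma der_or x x' z z' : D x x' -> D z z' -> D (FOr x z) (FOr x' z').
Proof. by move=> Dx Dz; apply: der_trans (der_orl Dx) (der_orr Dz). Qed.

Lemma der_step x y :
  (forall i p, erase p = x -> exists q o, [/\ lstep bar i p q o, erase q = y & allowed ok o]) ->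
  D x y.
Proof.
move=> Hxy; constructor=> i p Hp; have [q [o [Hst Hq O]]] := Hxy i p Hp.
exists q, [:: p; q], [:: o]; split; rewrite /= ?O //.
exact: chain_cons Hst chain_nil.
Qed.

Lemma der_srule x y :
  (forall p : lformula A, erase p = x -> exists2 q, erase q = y & srule p q) -> D x y.
Proof.
move=> Hxy; apply: der_step => i p /Hxy [q Hq S].
by exists q, None; split=> //; apply: (ls_struct _ _ Hole).
Qed.

Lemma eqn_relabel (x y : formula A) : Defs.eqn x y ->
  forall p : lformula A, erase p = x -> exists2 q, erase q = y & Defs.eqn p q.
Proof.
case=> [a b|a b|a b c|a b c|a|a||] p.
- by move=> /erase_FOr [p1 [p2 [-> <- <-]]]; exists (FOr p2 p1); last constructor.
- by move=> /erase_FAnd [p1 [p2 [-> <- <-]]]; exists (FAnd p2 p1); last constructor.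
- move=> /erase_FOr [p12 [p3 [-> /erase_FOr [p1 [p2 [-> <- <-]]] <-]]].
  by exists (FOr p1 (FOr p2 p3)); last constructor.
- move=> /erase_FAnd [p12 [p3 [-> /erase_FAnd [p1 [p2 [-> <- <-]]] <-]]].
  by exists (FAnd p1 (FAnd p2 p3)); last constructor.
- by move=> /erase_FOr [p1 [p2 [-> <- /erase_FF ->]]]; exists p1; last constructor.
- by move=> /erase_FAnd [p1 [p2 [-> <- /erase_FT ->]]]; exists p1; last constructor.
- by move=> /erase_FOr [p1 [p2 [-> /erase_FT -> /erase_FT ->]]]; exists FT; last constructor.
- by move=> /erase_FAnd [p1 [p2 [-> /erase_FF -> /erase_FF ->]]]; exists FF; last constructor.
Qed.

Lemma eqn_relabel_rev (x y : formula A) : Defs.eqn x y ->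
  forall q : lformula A, erase q = y -> exists2 p, erase p = x & Defs.eqn p q.
Proof.
case=> [a b|a b|a b c|a b c|a|a||] q.
- by move=> /erase_FOr [p1 [p2 [-> <- <-]]]; exists (FOr p2 p1); last constructor.
- by move=> /erase_FAnd [p1 [p2 [-> <- <-]]]; exists (FAnd p2 p1); last constructor.
- move=> /erase_FOr [p1 [p23 [-> <- /erase_FOr [p2 [p3 [-> <- <-]]]]]].
  by exists (FOr (FOr p1 p2) p3); last constructor.
- move=> /erase_FAnd [p1 [p23 [-> <- /erase_FAnd [p2 [p3 [-> <- <-]]]]]].
  by exists (FAnd (FAnd p1 p2) p3); last constructor.
- by move=> Hq; exists (FOr q FF); rewrite -?Hq //; constructor.
- by move=> Hq; exists (FAnd q FT); rewrite -?Hq //; constructor.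
- by move=> /erase_FT ->; exists (FOr FT FT); last constructor.
- by move=> /erase_FF ->; exists (FAnd FF FF); last constructor.
Qed.

Lemma der_eqn x y : Defs.eqn x y -> D x y.
Proof.
by move=> E; apply: der_srule => p /(eqn_relabel E) [q Hq E']; exists q; last exact: sr_eq_lr.
Qed.

Lemma der_eqn_rev x y : Defs.eqn x y -> D y x.
Proof.
by move=> E; apply: der_srule => q /(eqn_relabel_rev E) [p Hp E']; exists p; last exact: sr_eq_rl.
Qed.

Lemma der_switch a b c : D (FAnd a (FOr b c)) (FOr (FAnd a b) c).
Proof.
apply: der_srule => p /erase_FAnd [p1 [p' [-> <- /erase_FOr [p2 [p3 [-> <- <-]]]]]].
by exists (FOr (FAnd p1 p2) p3); last constructor.
Qed.

Lemma der_medial a b c d : D (FOr (FAnd a b) (FAnd c d)) (FAnd (FOr a c) (FOr b d)).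
Proof.
apply: der_srule => p /erase_FOr [p' [p'' [->]]].
move=> /erase_FAnd [p1 [p2 [-> <- <-]]] /erase_FAnd [p3 [p4 [-> <- <-]]].
by exists (FAnd (FOr p1 p3) (FOr p2 p4)); last constructor.
Qed.

Lemma der_arule x y l : ok l ->
  (forall i p, erase p = x -> exists q ups, arule bar i p q l ups /\ erase q = y) -> D x y.
Proof.
move=> okl Hxy; apply: der_step => i p /(Hxy i) [q [ups [R Hq]]].
by exists q, (Some (l, ups)); split=> //; apply: (ls_atomic Hole).
Qed.

Lemma der_int a : ok VInt -> D FT (FOr (FAt a) (FAt (bar a))).
Proof.
by move=> okl; apply: der_arule okl _ => i p /erase_FT ->; do 2 eexists; split; first constructor.
Qed.

Lemma der_weak a : ok VWeak -> D FF (FAt a).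
Proof.
by move=> okl; apply: der_arule okl _ => i p /erase_FF ->; do 2 eexists; split; first constructor.
Qed.

Lemma der_contr a : ok VContr -> D (FOr (FAt a) (FAt a)) (FAt a).
Proof.
move=> okl; apply: der_arule okl _ => i p.
move=> /erase_FOr [p1 [p2 [-> /erase_FAt [e1 ->] /erase_FAt [e2 ->]]]].
by do 2 eexists; split; first constructor.
Qed.

Lemma der_cut a : ok VCut -> D (FAnd (FAt a) (FAt (bar a))) FF.
Proof.
move=> okl; apply: der_arule okl _ => i p.
move=> /erase_FAnd [p1 [p2 [-> /erase_FAt [e1 ->] /erase_FAt [e2 ->]]]].
by do 2 eexists; split; first constructor.
Qed.

Lemma der_coweak a : ok VCoweak -> D (FAt a) FT.
Proof.
move=> okl; apply: der_arule okl _ => i p /erase_FAt [e ->].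
by do 2 eexists; split; first constructor.
Qed.

Lemma der_cocontr a : ok VCocontr -> D (FAt a) (FAnd (FAt a) (FAt a)).
Proof.
move=> okl; apply: der_arule okl _ => i p /erase_FAt [e ->].
by do 2 eexists; split; first constructor.
Qed.

End Derivability.

Fixpoint eval (X : Type) (v : X -> bool) (x : formula X) : bool :=
  match x with
  | FF => false | FT => true | FAt a => v a
  | FOr x y => eval v x || eval v y
  | FAnd x y => eval v x && eval v y
  end.

Lemma eqn_eval (X : Type) (v : X -> bool) x y : Defs.eqn x y -> eval v x = eval v y.
Proof.
case=> /= [a b|a b|a b c|a b c|a|a||] //.
- exact: orbC.
- exact: andbC.
- exact: esym (orbA _ _ _).
- exact: esym (andbA _ _ _).
- exact: orbF.
- exact: andbT.
Qed.

Lemma srule_eval (X : Type) (v : X -> bool) x y : srule x y -> eval v x -> eval v y.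
Proof.
case=> [a b c|a b c d|a b E|a b E] /=; rewrite ?(eqn_eval (v := v) E) //.
  by case: (eval v a); case: (eval v b); case: (eval v c).
by case: (eval v a); case: (eval v b); case: (eval v c); case: (eval v d).
Qed.

Lemma eval_plug (X : Type) (v : X -> bool) c a b :
  (eval v a -> eval v b) -> eval v (plug c a) -> eval v (plug c b).
Proof.
move=> Hab; elim: c => [|c IH q|q c IH|c IH q|q c IH] //= /[dup] H.
- by case/orP=> [/IH ->|->]; rewrite ?orbT.
- by case/orP=> [->|/IH ->]; rewrite ?orbT.
- by case/andP=> /IH -> ->.
- by case/andP=> -> /IH ->.
Qed.

Section Soundness.
Variables (A : Type) (bar : A -> A).

Definition admissible (v : A -> bool) := forall a, v (bar a) = ~~ v a.

Lemma eval_erase (v : A -> bool) (p : lformula A) : eval v (erase p) = eval (v \o fst) p.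
Proof. by elim: p => //= [p -> q ->|p -> q ->]. Qed.

Lemma lstep_sound v i (p q : lformula A) o : admissible v -> lstep bar i p q o ->
  eval v (erase p) -> eval v (erase q).
Proof.
rewrite !eval_erase => adm [c a b S|c a b l ups R]; apply: eval_plug; first exact: srule_eval.
by case: R => /= [a'|a'|a' e1 e2|a' e1 e2|a' e|a' e]; rewrite ?adm; case: (v a').
Qed.

Lemma derivation_sound (D : derivation A) x y : is_derivation bar D x y ->
  forall v, admissible v -> eval v x -> eval v y.
Proof.
case=> Hsz [_ [Hst [<- <-]]] v adm; rewrite -nth0 -nth_last Hsz /=.
suff: forall k, k <= size (dinfo D) ->
    eval v (erase (nth FF (dforms D) 0)) -> eval v (erase (nth FF (dforms D) k)) by apply.
elim=> // k IH Hk H0; exact: lstep_sound adm (Hst k Hk) (IH (ltnW Hk) H0).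
Qed.

End Soundness.

Lemma all_In (X : Type) (v : X -> bool) c : (forall b, List.In b c -> v b) -> all v c.
Proof. by elim: c => //= b c IH H; rewrite H /=; [apply: IH => z Hz; apply: H|]; [right|left]. Qed.

Lemma In_all (X : Type) (v : X -> bool) c b : all v c -> List.In b c -> v b.
Proof. by elim: c => //= x c IH /andP [H1 H2] [<-|/IH]; last exact. Qed.

Lemma has_In (X : Type) (p : X -> bool) c cs : List.In c cs -> p c -> has p cs.
Proof. by elim: cs => //= c' cs IH [->->|/IH H /H ->]; rewrite ?orbT. Qed.

Lemma eval_agree (X : Type) (v w : X -> bool) y :
  (forall b, List.In b (leaves y) -> v b = w b) -> eval v y = eval w y.
Proof.
elim: y => //= [a|x IHx y IHy|x IHx y IHy] H; first by apply: H; left.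
  by rewrite IHx ?IHy // => b Hb; apply: H; apply: List.in_or_app; [right|left].
by rewrite IHx ?IHy // => b Hb; apply: H; apply: List.in_or_app; [right|left].
Qed.

Lemma count_lt_sub (X : Type) (p q : X -> bool) s : subpred q p ->
  (exists z, [/\ List.In z s, p z & ~~ q z]) -> count q s < count p s.
Proof.
move=> Hqp; elim: s => [|x s IH] [z [Hz Hp Hq]] //=.
case: Hz => [Ez|Hz].
  by subst z; rewrite Hp (negbTE Hq) add0n add1n ltnS; apply: sub_count.
have := IH (ex_intro _ z (And3 Hz Hp Hq)); case Eq: (q x); case Ep: (p x) => //=;
  rewrite ?add0n ?add1n ?ltnS // => H; first [exact: ltnW H | by rewrite (Hqp _ Eq) in Ep].
Qed.

Section DerivedRules.
Variables (A : Type) (bar : A -> A) (ok : vlabel -> bool) (a0 : A).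
Hypotheses (okW : ok VWeak) (okCW : ok VCoweak) (okC : ok VContr) (okCC : ok VCocontr).
Local Notation D := (derivable bar ok).
Local Notation admissible := (admissible bar).

Lemma der_andC x y : D (FAnd x y) (FAnd y x). Proof. exact/der_eqn/eq_comm_and. Qed.
Lemma der_orC x y : D (FOr x y) (FOr y x). Proof. exact/der_eqn/eq_comm_or. Qed.
Lemma der_andA x y z : D (FAnd (FAnd x y) z) (FAnd x (FAnd y z)).
Proof. exact/der_eqn/eq_assoc_and. Qed.
Lemma der_andAr x y z : D (FAnd x (FAnd y z)) (FAnd (FAnd x y) z).
Proof. exact/der_eqn_rev/eq_assoc_and. Qed.
Lemma der_orA x y z : D (FOr (FOr x y) z) (FOr x (FOr y z)).
Proof. exact/der_eqn/eq_assoc_or. Qed.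
Lemma der_orAr x y z : D (FOr x (FOr y z)) (FOr (FOr x y) z).
Proof. exact/der_eqn_rev/eq_assoc_or. Qed.
Lemma der_andT x : D (FAnd x FT) x. Proof. exact/der_eqn/eq_unit_and. Qed.
Lemma der_andTr x : D x (FAnd x FT). Proof. exact/der_eqn_rev/eq_unit_and. Qed.
Lemma der_orF x : D (FOr x FF) x. Proof. exact/der_eqn/eq_unit_or. Qed.
Lemma der_orFr x : D x (FOr x FF). Proof. exact/der_eqn_rev/eq_unit_or. Qed.
Lemma der_Tand x : D (FAnd FT x) x. Proof. exact: der_trans der_andC der_andT. Qed.
Lemma der_For x : D (FOr FF x) x. Proof. exact: der_trans der_orC der_orF. Qed.

Lemma der_andACA a b c d : D (FAnd (FAnd a b) (FAnd c d)) (FAnd (FAnd a c) (FAnd b d)).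
Proof.
apply: der_trans der_andA _; apply: der_trans (der_andr der_andAr) _.
apply: der_trans (der_andr (der_andl der_andC)) _.
exact: der_trans (der_andr der_andA) der_andAr.
Qed.

Lemma der_orACA a b c d : D (FOr (FOr a b) (FOr c d)) (FOr (FOr a c) (FOr b d)).
Proof.
apply: der_trans der_orA _; apply: der_trans (der_orr der_orAr) _.
apply: der_trans (der_orr (der_orl der_orC)) _.
exact: der_trans (der_orr der_orA) der_orAr.
Qed.

Lemma der_andxx x : D x (FAnd x x).
Proof.
elim: x => [|||x IHx y IHy|x IHx y IHy].
- exact/der_eqn_rev/eq_ff.
- exact: der_andTr.
- by move=> a; apply: der_cocontr.
- exact: der_trans (der_or IHx IHy) der_medial.
- exact: der_trans (der_and IHx IHy) der_andACA.
Qed.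

Lemma der_orxx x : D (FOr x x) x.
Proof.
elim: x => [|||x IHx y IHy|x IHx y IHy].
- exact: der_orF.
- exact/der_eqn/eq_tt.
- by move=> a; apply: der_contr.
- exact: der_trans der_orACA (der_or IHx IHy).
- exact: der_trans der_medial (der_and IHx IHy).
Qed.

Lemma der_FF_FT : D FF FT.
Proof. exact: der_trans (der_weak (a:=a0) okW) (der_coweak okCW). Qed.

Lemma der_FF x : D FF x.
Proof.
elim: x => [|||x IHx y IHy|x IHx y IHy].
- exact: der_refl.
- exact: der_FF_FT.
- by move=> a; apply: der_weak.
- exact: der_trans der_orFr (der_or IHx IHy).
- exact: der_trans (der_eqn_rev (eq_ff _)) (der_and IHx IHy).
Qed.

Lemma der_FT x : D x FT.
Proof.
elim: x => [|||x IHx y IHy|x IHx y IHy].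
- exact: der_FF_FT.
- exact: der_refl.
- by move=> a; apply: der_coweak.
- exact: der_trans (der_or IHx IHy) (der_eqn (eq_tt _)).
- exact: der_trans (der_and IHx IHy) der_andT.
Qed.

Lemma der_distr p q r : D (FAnd p (FOr q r)) (FOr (FAnd p q) (FAnd p r)).
Proof.
apply: der_trans (der_andl der_andxx) _; apply: der_trans der_andA _.
apply: der_trans (der_andr der_switch) _.
apply: der_trans (der_andr der_orC) _.
exact: der_trans der_switch der_orC.
Qed.

Lemma der_distr_r p q r : D (FAnd (FOr q r) p) (FOr (FAnd q p) (FAnd r p)).
Proof.
apply: der_trans der_andC _; apply: der_trans der_distr _.
exact: der_or der_andC der_andC.
Qed.

Lemma der_proj1 x y : D (FAnd x y) x.
Proof. exact: der_trans (der_andr der_FT) der_andT. Qed.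
Lemma der_proj2 x y : D (FAnd x y) y.
Proof. exact: der_trans der_andC der_proj1. Qed.
Lemma der_inl x y : D x (FOr x y).
Proof. exact: der_trans der_orFr (der_orr der_FF). Qed.
Lemma der_inr x y : D y (FOr x y).
Proof. exact: der_trans der_inl der_orC. Qed.

Definition clause (c : seq A) : formula A := foldr (fun a f => FAnd (FAt a) f) FT c.
Definition clauses (cs : seq (seq A)) : formula A := foldr (fun c f => FOr (clause c) f) FF cs.

Fixpoint dnf (x : formula A) : seq (seq A) :=
  match x with
  | FF => [::] | FT => [:: [::]] | FAt a => [:: [:: a]]
  | FOr x y => dnf x ++ dnf y
  | FAnd x y => [seq c1 ++ c2 | c1 <- dnf x, c2 <- dnf y]
  end.

Lemma der_clause_lit b c : List.In b c -> D (clause c) (FAt b).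
Proof.
elim: c => //= a c IH [->|/IH H]; first exact: der_proj1.
exact: der_trans der_proj2 H.
Qed.

Lemma der_clause_sub c c' : (forall b, List.In b c' -> List.In b c) -> D (clause c) (clause c').
Proof.
elim: c' => [|b c' IH] Hsub /=; first exact: der_FT.
apply: der_trans der_andxx (der_and _ _); first by apply/der_clause_lit/Hsub; left.
by apply: IH => z Hz; apply: Hsub; right.
Qed.

Lemma der_clauses_cat s1 s2 : D (FOr (clauses s1) (clauses s2)) (clauses (s1 ++ s2)).
Proof.
elim: s1 => [|c s1 IH] /=; first exact: der_For.
exact: der_trans der_orA (der_orr IH).
Qed.

Lemma der_clause_cat c1 c2 : D (FAnd (clause c1) (clause c2)) (clause (c1 ++ c2)).
Proof.
elim: c1 => [|a c1 IH] /=; first exact: der_Tand.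
exact: der_trans der_andA (der_andr IH).
Qed.

Lemma der_clause_clauses c s : D (FAnd (clause c) (clauses s)) (clauses [seq c ++ c2 | c2 <- s]).
Proof.
elim: s => [|c2 s IH] /=; first exact: der_proj2.
exact: der_trans der_distr (der_or der_clause_cat IH).
Qed.

Lemma der_clauses_prod s1 s2 :
  D (FAnd (clauses s1) (clauses s2)) (clauses [seq c1 ++ c2 | c1 <- s1, c2 <- s2]).
Proof.
elim: s1 => [|c s1 IH] /=; first exact: der_proj1.
apply: der_trans der_distr_r _.
exact: der_trans (der_or der_clause_clauses IH) der_clauses_cat.
Qed.

Lemma der_dnf x : D x (clauses (dnf x)).
Proof.
elim: x => [|||x IHx y IHy|x IHx y IHy] /=.
- exact: der_refl.
- exact: der_orFr.
- by move=> a; apply: der_trans der_andTr der_orFr.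
- exact: der_trans (der_or IHx IHy) der_clauses_cat.
- exact: der_trans (der_and IHx IHy) der_clauses_prod.
Qed.

Lemma has_all_prod (v : A -> bool) s1 s2 :
  has (all v) [seq c1 ++ c2 | c1 <- s1, c2 <- s2] = has (all v) s1 && has (all v) s2.
Proof.
elim: s1 => [|c s1 IH] //=; rewrite has_cat IH has_map andb_orl; congr (_ || _).
elim: s2 {IH} => [|c2 s2 IH2] /=; first by rewrite andbF.
by rewrite IH2 all_cat andb_orr.
Qed.

Lemma eval_dnf (v : A -> bool) x : eval v x = has (all v) (dnf x).
Proof.
elim: x => //= [a|x IHx y IHy|x IHx y IHy].
- by rewrite andbT orbF.
- by rewrite has_cat IHx IHy.
- by rewrite has_all_prod IHx IHy.
Qed.

Definition consistent (c : seq A) : Prop := forall a, List.In a c -> ~ List.In (bar a) c.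
Definition consistentb (c : seq A) : bool :=
  if excluded_middle_informative (consistent c) then true else false.

Lemma consistentbP c : reflect (consistent c) (consistentb c).
Proof. by rewrite /consistentb; case: excluded_middle_informative => H; constructor. Qed.

Lemma der_filter_consistent cs : ok VCut -> D (clauses cs) (clauses (filter consistentb cs)).
Proof.
move=> okCut; elim: cs => [|c cs IH] /=; first exact: der_refl.
case: consistentbP => [_|Hc] /=; first exact: der_orr IH.
apply: der_trans _ IH; apply: der_trans _ der_For; apply: der_orl.
have [a [Ha Hba]] : exists a, List.In a c /\ List.In (bar a) c.
  by apply: NNPP => H; apply: Hc => a Ha Hba; apply: H; exists a.
apply: der_trans (der_clause_sub (c' := [:: a; bar a]) _) _.
  by move=> b /= [<-|[<-|[]]].
exact: der_trans (der_andr der_andT) (der_cut okCut).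
Qed.

Section Interaction.
Hypothesis bar_inv : forall a, bar (bar a) = a.
Hypothesis bar_neq : forall a, bar a <> a.

(* Make true the representative chosen in every pair [{a, bar a}]. *)
Lemma exists_admissible : exists s : A -> bool, admissible s.
Proof.
pose pair b x := x = b \/ x = bar b.
pose rep b := epsilon (inhabits a0) (pair b).
have pair_bar b : pair (bar b) = pair b.
  apply: functional_extensionality => z; apply: propositional_extensionality.
  by rewrite /pair bar_inv; tauto.
have rep_pair b : pair b (rep b) by apply: epsilon_spec; exists b; left.
exists (fun b => if excluded_middle_informative (rep b = b) then true else false) => b.
have E : rep (bar b) = rep b by rewrite /rep pair_bar.
case: excluded_middle_informative => H1; case: excluded_middle_informative => H2 //.
- by exfalso; apply: (@bar_neq b); rewrite -{1}H1 E.
- by case: (rep_pair b) => // H3; case: H1; rewrite E.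
Qed.

Lemma consistent_sat c : consistent c -> exists v, admissible v /\ all v c.
Proof.
move=> Hc; have [s Hs] := exists_admissible.
exists (fun b => if excluded_middle_informative (List.In b c) then true
   else if excluded_middle_informative (List.In (bar b) c) then false else s b).
split; last by apply: all_In => b Hb; case: excluded_middle_informative.
move=> b; rewrite bar_inv.
case: (excluded_middle_informative (List.In (bar b) c)) => H1;
  case: (excluded_middle_informative (List.In b c)) => H2 //=.
by case: (Hc b H2 H1).
Qed.

Lemma consistent_cons c b : consistent c -> ~ List.In (bar b) c -> consistent (b :: c).
Proof.
move=> Hc Hb a /= [<-|Ha] [Hba|Hba].
- exact: bar_neq (esym Hba).
- exact: Hb Hba.
- by apply: Hb; rewrite Hba bar_inv.
- exact: Hc Ha Hba.
Qed.

Definition entails c y := forall v, admissible v -> all v c -> eval v y.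
Definition decided c b := List.In b c \/ List.In (bar b) c.
Definition decidedb c b : bool := if excluded_middle_informative (decided c b) then true else false.
Lemma decidedbP c b : reflect (decided c b) (decidedb c b).
Proof. by rewrite /decidedb; case: excluded_middle_informative => H; constructor. Qed.

Definition undecided c y := count (fun b => ~~ decidedb c b) (leaves y).

Lemma entails_decided_or c y1 y2 : consistent c ->
  (forall b, List.In b (leaves (FOr y1 y2)) -> decided c b) ->
  entails c (FOr y1 y2) -> entails c y1 \/ entails c y2.
Proof.
move=> Hc Hd Hs; have [v0 [adm0 Hv0]] := consistent_sat Hc.
have agree v : admissible v -> all v c -> forall b, List.In b (leaves (FOr y1 y2)) -> v b = v0 b.
  move=> adm Hv b /Hd [Hb|Hb]; first by rewrite (In_all Hv Hb) (In_all Hv0 Hb).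
  by move: (In_all Hv Hb) (In_all Hv0 Hb); rewrite adm adm0; case: (v b); case: (v0 b).
have /orP [E|E] := Hs v0 adm0 Hv0; [left|right] => v adm Hv;
  rewrite (eval_agree (w := v0)) // => b Hb; apply: agree => //;
  apply: List.in_or_app; by [left|right].
Qed.

Lemma entails_or_cases c y1 y2 : consistent c -> entails c (FOr y1 y2) ->
  [\/ entails c y1, entails c y2 | exists b, List.In b (leaves (FOr y1 y2)) /\ ~ decided c b].
Proof.
move=> Hc Hs.
case: (classic (exists b, List.In b (leaves (FOr y1 y2)) /\ ~ decided c b)) => [?|Hd].
  exact: Or33.
have Hdec b : List.In b (leaves (FOr y1 y2)) -> decided c b.
  by move=> Hb; apply: NNPP => Hn; apply: Hd; exists b.
by case: (entails_decided_or Hc Hdec Hs) => H; [apply: Or31|apply: Or32].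
Qed.

Lemma undecided_cons c b z y : List.In b (leaves y) -> ~ decided c b -> z = b \/ z = bar b ->
  undecided (z :: c) y < undecided c y.
Proof.
move=> Hb Hnd Hz; apply: count_lt_sub.
  move=> w /=; apply: contra => /decidedbP Hd; apply/decidedbP.
  by case: Hd => H; [left|right]; right.
exists b; split=> //; first by apply/negP => /decidedbP.
by rewrite negbK; apply/decidedbP; case: Hz => ->; [left|right]; left; rewrite ?bar_inv.
Qed.

Hypothesis okI : ok VInt.

(* The only use of interaction: [c] becomes [(b /\ c) \/ (bar b /\ c)]. *)
Lemma der_clause_split c b y :
  D (clause (b :: c)) y -> D (clause (bar b :: c)) y -> D (clause c) y.
Proof.
move=> D1 D2; apply: der_trans der_andTr _.
apply: der_trans (der_andr (der_int (a := b) okI)) _; apply: der_trans der_distr _.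
exact: der_trans (der_or (der_trans der_andC D1) (der_trans der_andC D2)) der_orxx.
Qed.

Lemma der_clause_entails_step n :
  (forall y c, undecided c y < n -> consistent c -> entails c y -> D (clause c) y) ->
  forall y c, undecided c y <= n -> consistent c -> entails c y -> D (clause c) y.
Proof.
move=> IHn; elim=> [|| b |y1 IH1 y2 IH2|y1 IH1 y2 IH2] c Hu Hc Hs.
- by have [v [adm Hv]] := consistent_sat Hc; have := Hs v adm Hv.
- exact: der_FT.
- case: (classic (List.In b c)) => Hb; first exact: der_clause_lit.
  have /consistent_sat [v [adm /andP [Hvb Hv]]] : consistent (bar b :: c).
    by apply: consistent_cons Hc _; rewrite bar_inv.
  by have := Hs v adm Hv; rewrite /= -[v b]negbK -adm Hvb.
- have [Hu1 Hu2] : undecided c y1 <= n /\ undecided c y2 <= n.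
    by split; apply: leq_trans Hu; rewrite /undecided /= count_cat ?leq_addr ?leq_addl.
  case: (entails_or_cases Hc Hs) => [H1|H2|[b [Hb Hnd]]].
  + exact: der_trans (IH1 c Hu1 Hc H1) der_inl.
  + exact: der_trans (IH2 c Hu2 Hc H2) der_inr.
  apply: der_clause_split; apply: IHn.
  + exact: leq_trans (undecided_cons Hb Hnd (or_introl erefl)) Hu.
  + by apply: consistent_cons => // H; apply: Hnd; right.
  + by move=> v adm /andP [_ Hv]; apply: Hs.
  + exact: leq_trans (undecided_cons Hb Hnd (or_intror erefl)) Hu.
  + by apply: consistent_cons => //; rewrite bar_inv => H; apply: Hnd; left.
  + by move=> v adm /andP [_ Hv]; apply: Hs.
- have [Hu1 Hu2] : undecided c y1 <= n /\ undecided c y2 <= n.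
    by split; apply: leq_trans Hu; rewrite /undecided /= count_cat ?leq_addr ?leq_addl.
  apply: der_trans der_andxx (der_and (IH1 c Hu1 Hc _) (IH2 c Hu2 Hc _)) => v adm Hv;
    by case/andP: (Hs v adm Hv).
Qed.

Lemma der_clause_entails y c : consistent c -> entails c y -> D (clause c) y.
Proof.
suff Hle n : forall y c, undecided c y <= n -> consistent c -> entails c y -> D (clause c) y.
  exact: Hle.
elim/ltn_ind: n => n IHn; apply: der_clause_entails_step => y' c' Hlt.
exact: IHn _ Hlt y' c' (leqnn _).
Qed.

Lemma der_clauses_entails cs y :
  (forall c, List.In c cs -> consistent c /\ entails c y) -> D (clauses cs) y.
Proof.
elim: cs => [|c cs IH] Hcs /=; first exact: der_FF.
have [Hc Hs] := Hcs c (or_introl erefl).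
apply: der_trans (der_or (der_clause_entails Hc Hs) (IH _)) der_orxx.
by move=> c' Hc'; apply: Hcs; right.
Qed.

End Interaction.
End DerivedRules.

Definition no_int (l : vlabel) : bool := if l is VInt then false else true.
Definition no_cut (l : vlabel) : bool := if l is VCut then false else true.

Lemma valid_two_phase_derivable (A : Type) (bar : A -> A) (a0 : A)
    (bar_inv : forall a, bar (bar a) = a) (bar_neq : forall a, bar a <> a) (x y : formula A) :
  (forall v, admissible bar v -> eval v x -> eval v y) ->
  exists z, derivable bar no_int x z /\ derivable bar no_cut z y.
Proof.
move=> Hxy; exists (clauses (filter (consistentb bar) (dnf x))); split.
  exact: der_trans (der_dnf a0 isT isT isT) (der_filter_consistent a0 isT isT isT isT).
apply: (der_clauses_entails a0) => // c /List.filter_In [Hc /consistentbP Hcons].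
split=> // v adm Hv; apply: Hxy => //; rewrite eval_dnf; exact: has_In Hc Hv.
Qed.

Section Leaves.
Variable X : Type.

Lemma in_leaves_plug (c : ctx X) a q : List.In q (leaves a) -> List.In q (leaves (plug c a)).
Proof.
move=> Hq; elim: c => //= [c IH r|r c IH|c IH r|r c IH]; apply: List.in_or_app; by [left|right].
Qed.

Lemma in_leaves_plug_inv (c : ctx X) b q : List.In q (leaves (plug c b)) ->
  List.In q (leaves b) \/ forall a, List.In q (leaves (plug c a)).
Proof.
elim: c => /= [|c IH r|r c IH|c IH r|r c IH]; first by left.
all: move=> H0; case: (List.in_app_or _ _ _ H0) => [H|H].
all: first [case: (IH H) => [|H']; [by left|right=> a; apply: List.in_or_app]
           | right=> a; apply: List.in_or_app]; by [left|right].
Qed.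

Lemma eqn_leaves (a b : formula X) q :
  Defs.eqn a b -> List.In q (leaves b) <-> List.In q (leaves a).
Proof.
case=> /= [a' b'|a' b'|a' b' c'|a' b' c'|a'|a'||]; rewrite ?cats0 ?catA //;
  rewrite !List.in_app_iff; tauto.
Qed.

Lemma srule_leaves (a b : formula X) q : srule a b -> List.In q (leaves b) -> List.In q (leaves a).
Proof.
case=> /= [a' b' c'|a' b' c' d'|a' b' E|a' b' E]; rewrite ?List.in_app_iff; try tauto;
  by move/(eqn_leaves (q := q) E).
Qed.

End Leaves.

Lemma lstep_inv (A : Type) (bar : A -> A) i (p q : lformula A) o : lstep bar i p q o ->
  exists c a b, [/\ p = plug c a, q = plug c b &
    (o = None /\ srule a b) \/ exists lb ups, o = Some (lb, ups) /\ arule bar i a b lb ups].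
Proof.
case=> [c a b S|c a b lb ups R]; exists c, a, b; split=> //; [left|right] => //.
by exists lb, ups.
Qed.

Section AtomicRules.
Variables (A : Type) (bar : A -> A).
Hypothesis bar_inv : forall a, bar (bar a) = a.
Hypothesis bar_neq : forall a, bar a <> a.

Lemma arule_born i a b lb ups q : arule bar i a b lb ups -> List.In q (leaves b) -> q.2.1 = i.+1.
Proof.
case=> /= [x|x|x e1 e2|x e1 e2|x e|x e] H //.
- by case: H => [<-|[<-|[]]].
- by case: H => [<-|[]].
- by case: H => [<-|[]].
- by case: H => [<-|[<-|[]]].
Qed.

Lemma arule_consumed i a b lb ups e : arule bar i a b lb ups -> e \in ups ->
  exists x, List.In (x, e) (leaves a).
Proof.
case=> /= [x|x|x e1 e2|x e1 e2|x e'|x e']; rewrite ?inE //.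
- by case/orP=> /eqP ->; [exists x; left|exists x; right; left].
- by case/orP=> /eqP ->; [exists x; left|exists (bar x); right; left].
- by move=> /eqP ->; exists x; left.
- by move=> /eqP ->; exists x; left.
Qed.

Ltac atom_cases := repeat match goal with
  | H : _ \/ _ |- _ => destruct H
  | H : False |- _ => destruct H
  | H : is_true (_ || _) |- _ => case/orP: H => H
  | H : is_true (_ \in [::]) |- _ => by rewrite in_nil in H
  | H : is_true (_ == _) |- _ => move/eqP: H => H
  | H : (_, _) = (_, _) |- _ => injection H; clear H; intros; subst
  end; try done;
  try match goal with
  | H : ?z = bar ?z |- _ => by case: (bar_neq (esym H))
  | H : bar ?z = ?z |- _ => by case: (bar_neq H)
  end.

Lemma arule_atom i a b lb ups e f x y : arule bar i a b lb ups -> e \in ups ->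
  List.In (x, e) (leaves a) -> List.In (y, f) (leaves b) -> x = y.
Proof.
by case=> /= [x'|x'|x' e1 e2|x' e1 e2|x' e'|x' e'] H1 H2 H3; rewrite ?inE in H1; atom_cases.
Qed.

Lemma arule_born_dual i a b lb ups e f x : arule bar i a b lb ups ->
  List.In (x, e) (leaves b) -> List.In (bar x, f) (leaves b) -> lb = VInt /\ ups = [::].
Proof. by case=> /= [x'|x'|x' e1 e2|x' e1 e2|x' e'|x' e'] H1 H2; atom_cases. Qed.

Lemma arule_consumed_dual i a b lb ups e f x : arule bar i a b lb ups -> e \in ups -> f \in ups ->
  List.In (x, e) (leaves a) -> List.In (bar x, f) (leaves a) -> lb = VCut.
Proof.
by case=> /= [x'|x'|x' e1 e2|x' e1 e2|x' e'|x' e'] H0 H1 H2 H3; rewrite ?inE in H0 H1; atom_cases.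
Qed.

Lemma arule_int_dual i a b ups e f x y : arule bar i a b VInt ups ->
  List.In (x, e) (leaves b) -> List.In (y, f) (leaves b) -> e <> f -> y = bar x.
Proof.
move El: VInt => lb R; case: R El => /= [x'|x'|x' e1 e2|x' e1 e2|x' e'|x' e'] //= _ H1 H2 H3;
  atom_cases; by rewrite bar_inv.
Qed.

Lemma arule_cut_dual i a b ups e f x y : arule bar i a b VCut ups ->
  List.In (x, e) (leaves a) -> List.In (y, f) (leaves a) -> e <> f -> y = bar x.
Proof.
move El: VCut => lb R; case: R El => /= [x'|x'|x' e1 e2|x' e1 e2|x' e'|x' e'] //= _ H1 H2 H3;
  atom_cases; by rewrite bar_inv.
Qed.

Lemma arule_born_uniq i a b lb ups e x y : arule bar i a b lb ups ->
  List.In (x, e) (leaves b) -> List.In (y, e) (leaves b) -> x = y.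
Proof. by case=> /= [x'|x'|x' e1 e2|x' e1 e2|x' e'|x' e'] H1 H2; atom_cases. Qed.

Lemma arule_cut_nothing_born i a b ups q : arule bar i a b VCut ups -> ~ List.In q (leaves b).
Proof. by move El: VCut => lb R; case: R El => //=; tauto. Qed.

End AtomicRules.

Lemma In_uniq_snd (X : Type) (s : seq (X * edge)) x y e :
  uniq (map snd s) -> List.In (x, e) s -> List.In (y, e) s -> x = y.
Proof.
have In_snd (q : X * edge) t : List.In q t -> q.2 \in map snd t.
  by elim: t => //= r t IH [->|/IH]; rewrite inE ?eqxx // => ->; rewrite orbT.
elim: s => //= q s IH /andP [Hn Hu] [Hx|Hx] [Hy|Hy].
- by move: Hy; rewrite Hx => -[].
- by move: Hn; rewrite Hx (In_snd _ _ Hy).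
- by move: Hn; rewrite Hy (In_snd _ _ Hx).
- exact: IH.
Qed.

Lemma mem_flatten_map_nth (X : Type) (g : X -> seq edge) (s : seq X) e d :
  e \in flatten [seq g p | p <- s] -> exists2 j, j < size s & e \in g (nth d s j).
Proof.
elim: s => //= p s IH; rewrite mem_cat => /orP [H|/IH [j H1 H2]]; first by exists 0.
by exists j.+1.
Qed.

Lemma map_In_inv (X : Type) (f : X -> edge) s e : e \in map f s -> exists2 x, List.In x s & f x = e.
Proof.
elim: s => //= x s IH; rewrite inE => /orP [/eqP ->|/IH [z H1 H2]]; first by exists x; first left.
by exists z; first right.
Qed.

Lemma head_rev (X : Type) (x0 : X) s : head x0 (rev s) = last x0 s.
Proof. by elim/last_ind: s => //= t z _; rewrite rev_rcons last_rcons. Qed.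

Lemma last_rev (X : Type) (x0 : X) s : last x0 (rev s) = head x0 s.
Proof. by case: s => //= y t; rewrite rev_cons last_rcons. Qed.

Lemma last_default (X : Type) (a b : X) s : 0 < size s -> last a s = last b s.
Proof. by case: s. Qed.

Section Flow.
Variables (A : Type) (bar : A -> A) (Dv : derivation A) (TT : nat).
Hypothesis bar_inv : forall a, bar (bar a) = a.
Hypothesis bar_neq : forall a, bar a <> a.
Local Notation F j := (nth FF (dforms Dv) j).
Local Notation L := (dinfo Dv).
Hypothesis size_forms : size (dforms Dv) = (size L).+1.
Hypothesis premiss_edges :
  map snd (leaves (F 0)) = [seq (0, k) | k <- iota 0 (size (leaves (F 0)))].
Hypothesis steps : forall i, i < size L -> lstep bar i (F i) (F i.+1) (nth None L i).
Hypothesis cuts_before : forall j ups, nth None L j = Some (VCut, ups) -> j < TT.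
Hypothesis ints_after : forall j, nth None L j = Some (VInt, [::]) -> TT <= j.

Lemma born_before j : j <= size L -> forall q, List.In q (leaves (F j)) ->
  q.2.1 <= j /\ List.In q (leaves (F q.2.1)).
Proof.
elim: j => [_ q Hq|j IH Hj q Hq].
  have /List.in_map_iff [k [Hk _]] : List.In q.2 [seq (0, k) | k <- iota 0 (size (leaves (F 0)))].
    by rewrite -premiss_edges; apply: List.in_map.
  by rewrite -Hk.
have [c [a [b [E1 E2 [[_ S]|[lb [ups [_ R]]]]]]]] := lstep_inv (steps Hj).
- have Hqj : List.In q (leaves (F j)).
    move: Hq; rewrite E1 E2 => /in_leaves_plug_inv [Hb|]; last exact.
    exact/in_leaves_plug/(srule_leaves S).
  by have [H1 H2] := IH (ltnW Hj) q Hqj; split=> //; apply: leqW.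
- move: (Hq); rewrite E2 => /in_leaves_plug_inv [Hb|Hc]; first by rewrite (arule_born R Hb).
  have Hqj : List.In q (leaves (F j)) by rewrite E1; apply: Hc.
  by have [H1 H2] := IH (ltnW Hj) q Hqj; split=> //; apply: leqW.
Qed.

Lemma born_in_rhs n c a b q : n < size L -> F n = plug c a -> F n.+1 = plug c b ->
  List.In q (leaves (F n.+1)) -> q.2.1 = n.+1 -> List.In q (leaves b).
Proof.
move=> Hn E1 E2; rewrite E2 => /in_leaves_plug_inv [//|Hc] Hq1.
have : List.In q (leaves (F n)) by rewrite E1; apply: Hc.
by move/(born_before (ltnW Hn)) => [+ _]; rewrite Hq1 ltnn.
Qed.

Lemma born_by_arule q n : n < size L -> List.In q (leaves (F n.+1)) -> q.2.1 = n.+1 ->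
  exists lb ups c a b, [/\ nth None L n = Some (lb, ups), F n = plug c a, F n.+1 = plug c b,
    arule bar n a b lb ups & List.In q (leaves b)].
Proof.
move=> Hn Hq Hq1; have [c [a [b [E1 E2 [[_ S]|[lb [ups [Hl R]]]]]]]] := lstep_inv (steps Hn).
  have Hb := born_in_rhs Hn E1 E2 Hq Hq1.
  have : List.In q (leaves (F n)) by rewrite E1; apply/in_leaves_plug/(srule_leaves S).
  by move/(born_before (ltnW Hn)) => [+ _]; rewrite Hq1 ltnn.
by exists lb, ups, c, a, b; split=> //; apply: born_in_rhs E1 E2 Hq Hq1.
Qed.

Definition carries e x := exists2 j, j <= size L & List.In (x, e) (leaves (F j)).

Lemma carries_born e x : carries e x -> e.1 <= size L /\ List.In (x, e) (leaves (F e.1)).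
Proof.
move=> [j Hj /(born_before Hj) [H1 H2]]; split=> //; exact: leq_trans Hj.
Qed.

Lemma carries_uniq e x y : carries e x -> carries e y -> x = y.
Proof.
move=> /carries_born [He Hx] /carries_born [_ Hy]; move: He Hx Hy.
case E: e.1 => [|n] He Hx Hy.
  apply: In_uniq_snd Hx Hy; rewrite premiss_edges map_inj_uniq ?iota_uniq //.
  by move=> k k' [].
have [lb [ups [c [a [b [_ E1 E2 R Hbx]]]]]] := born_by_arule He Hx E.
exact: arule_born_uniq R Hbx (born_in_rhs He E1 E2 Hy E).
Qed.

Lemma edge_carries e : e \in edges Dv -> exists x, carries e x.
Proof.
move=> /(mem_flatten_map_nth (d := FF)) [j Hj /map_In_inv [q Hq Hqe]].
by exists q.1, j; [rewrite -ltnS -size_forms | rewrite -Hqe -surjective_pairing].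
Qed.

Lemma lo_consumed e n : lo Dv e = NV n ->
  n < size L /\ exists lb ups, nth None L n = Some (lb, ups) /\ e \in ups.
Proof.
rewrite /lo; case: ifP => // H [<-]; split=> //.
have := @nth_find _ None (consumes e) L; rewrite has_find => /(_ H).
by rewrite /consumes; case: nth => [[lb ups]|] // He; exists lb, ups.
Qed.

Lemma consumed_by_arule e n lb ups : n < size L -> nth None L n = Some (lb, ups) -> e \in ups ->
  exists c a b x, [/\ F n = plug c a, F n.+1 = plug c b, arule bar n a b lb ups,
    List.In (x, e) (leaves a) & carries e x /\ e.1 <= n].
Proof.
move=> Hn Hl He; have [c [a [b [E1 E2 [[H _]|[lb' [ups' [Hl' R]]]]]]]] := lstep_inv (steps Hn).
  by rewrite Hl in H.
move: Hl' R; rewrite Hl => -[<- <-] R.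
have [x Hx] := arule_consumed R He.
have Hf : List.In (x, e) (leaves (F n)) by rewrite E1; apply: in_leaves_plug.
exists c, a, b, x; split=> //; split; first by exists n; first exact: ltnW.
by have [] := born_before (ltnW Hn) Hf.
Qed.

Definition time (v : node) : nat :=
  match v with NTop => 0 | NV j => j.+1 | NBot => (size L).+1 end.

Lemma time_up e : time (up e) = e.1.
Proof. by rewrite /up; case: e.1. Qed.

Lemma up_NV e n : up e = NV n -> e.1 = n.+1.
Proof. by rewrite /up; case: e.1 => // m [->]. Qed.

Lemma time_up_lt_lo e : e \in edges Dv -> time (up e) < time (lo Dv e).
Proof.
move=> He; rewrite time_up; have [x /carries_born [Hs _]] := edge_carries He.
case Elo: (lo Dv e) => [||n] /=.
- by move: Elo; rewrite /lo; case: ifP.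
- by rewrite ltnS.
- have [Hn [lb [ups [Hl Hu]]]] := lo_consumed Elo.
  by have [c [a [b [x' [_ _ _ _ [_ H]]]]]] := consumed_by_arule Hn Hl Hu; rewrite ltnS.
Qed.

Lemma carries_through e f n x y :
  lo Dv e = NV n -> up f = NV n -> carries e x -> carries f y -> x = y.
Proof.
move=> Hlo Hup Hx Hy; have [Hn [lb [ups [Hl He]]]] := lo_consumed Hlo.
have [c [a [b [x' [E1 E2 R Hxa [Hhx _]]]]]] := consumed_by_arule Hn Hl He.
rewrite (carries_uniq Hx Hhx); have Hf1 := up_NV Hup.
have [_] := carries_born Hy; rewrite Hf1 => Hyf.
exact: arule_atom R He Hxa (born_in_rhs Hn E1 E2 Hyf Hf1).
Qed.

Lemma lo_dual_cut f g n x : lo Dv f = NV n -> lo Dv g = NV n ->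
  carries f x -> carries g (bar x) -> exists ups, nth None L n = Some (VCut, ups).
Proof.
move=> Hf Hg Hx Hy; have [Hn [lb [ups [Hl Hfu]]]] := lo_consumed Hf.
have [_ [lb' [ups' [Hl' Hgu]]]] := lo_consumed Hg.
move: Hl'; rewrite Hl => -[? ?]; subst lb' ups'.
have [c [a [b [x' [E1 E2 R Hxa [Hhx _]]]]]] := consumed_by_arule Hn Hl Hfu.
have [y' Hya] := arule_consumed R Hgu.
have Hhy : carries g y' by exists n; [exact: ltnW | rewrite E1; apply: in_leaves_plug].
rewrite -(carries_uniq Hx Hhx) in Hxa; rewrite -(carries_uniq Hy Hhy) in Hya.
by exists ups; rewrite (arule_consumed_dual (@bar_neq) R Hfu Hgu Hxa Hya).
Qed.

Lemma up_dual_int f g n x : up f = NV n -> up g = NV n ->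
  carries f x -> carries g (bar x) -> nth None L n = Some (VInt, [::]).
Proof.
move=> Hf Hg Hx Hy; have Hf1 := up_NV Hf; have Hg1 := up_NV Hg.
have [Hs Hxf] := carries_born Hx; have [_ Hyg] := carries_born Hy.
rewrite Hf1 in Hs Hxf; rewrite Hg1 in Hyg.
have [lb [ups [c [a [b [Hl E1 E2 R Hb]]]]]] := born_by_arule Hs Hxf Hf1.
have [Elb Eups] := arule_born_dual (@bar_neq) R Hb (born_in_rhs Hs E1 E2 Hyg Hg1).
by rewrite Hl Elb Eups.
Qed.

Lemma lo_int_absurd e n : nth None L n = Some (VInt, [::]) -> lo Dv e = NV n -> False.
Proof. by move=> Hl /lo_consumed [_ [lb [ups [+ He]]]]; rewrite Hl => -[_ E]; rewrite -E in He. Qed.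

Lemma up_cut_absurd e n ups :
  nth None L n = Some (VCut, ups) -> up e = NV n -> e \in edges Dv -> False.
Proof.
move=> Hl Hup He; have [x Hx] := edge_carries He; have He1 := up_NV Hup.
have [Hs Hxe] := carries_born Hx; rewrite He1 in Hs Hxe.
have [lb [ups' [c [a [b [Hl' E1 E2 R Hb]]]]]] := born_by_arule Hs Hxe He1.
move: Hl'; rewrite Hl => -[? ?]; subst lb ups'; exact: arule_cut_nothing_born R Hb.
Qed.

Lemma up_int_dual e1 e2 n ups x y : nth None L n = Some (VInt, ups) ->
  up e1 = NV n -> up e2 = NV n -> e1 <> e2 -> carries e1 x -> carries e2 y -> y = bar x.
Proof.
move=> Hl H1 H2 Hne Hx Hy; have E1' := up_NV H1; have E2' := up_NV H2.
have [Hs Hxe] := carries_born Hx; have [_ Hye] := carries_born Hy.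
rewrite E1' in Hs Hxe; rewrite E2' in Hye.
have [lb [ups' [c [a [b [Hl' E1 E2 R Hb]]]]]] := born_by_arule Hs Hxe E1'.
move: Hl'; rewrite Hl => -[? ?]; subst lb ups'.
exact: (arule_int_dual (@bar_inv) R Hb (born_in_rhs Hs E1 E2 Hye E2') Hne).
Qed.

Lemma lo_cut_dual e1 e2 n ups x y : nth None L n = Some (VCut, ups) ->
  lo Dv e1 = NV n -> lo Dv e2 = NV n -> e1 <> e2 -> carries e1 x -> carries e2 y -> y = bar x.
Proof.
move=> Hl H1 H2 Hne Hx Hy; have [Hn [lb [ups' [Hl' He1]]]] := lo_consumed H1.
have [_ [lb'' [ups'' [Hl'' He2]]]] := lo_consumed H2.
move: Hl' Hl''; rewrite Hl => -[? ?] [? ?]; subst lb ups' lb'' ups''.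
have [c [a [b [x' [E1 E2 R Hxa [Hhx _]]]]]] := consumed_by_arule Hn Hl He1.
have [y' Hya] := arule_consumed R He2.
have Hhy : carries e2 y' by exists n; [exact: ltnW | rewrite E1; apply: in_leaves_plug].
rewrite (carries_uniq Hx Hhx) (carries_uniq Hy Hhy).
exact: (arule_cut_dual (@bar_inv) R Hxa Hya Hne).
Qed.

Definition nonempty_in_edges (s : seq edge) :=
  [/\ 0 < size s, head (0, 0) s \in edges Dv & last (0, 0) s \in edges Dv].

Lemma nonempty_in_edges_cons e s :
  e \in edges Dv -> nonempty_in_edges s -> nonempty_in_edges (e :: s).
Proof. by move=> He [Hs _ Hl]; split=> //=; rewrite (last_default (b := (0, 0)) Hs). Qed.

Lemma dpath_shape v s v' : dpath Dv v s v' -> exists x,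
  [/\ nonempty_in_edges s, up (head (0, 0) s) = v, lo Dv (last (0, 0) s) = v',
      carries (head (0, 0) s) x /\ carries (last (0, 0) s) x & time v < time v'].
Proof.
elim=> {v s v'} [e He|e s v' He _ [x [Hne Hup Hlo [Hax Hbx] Htm]]].
  by have [x Hx] := edge_carries He; exists x; split=> //; apply: time_up_lt_lo.
have [y Hy] := edge_carries He; exists y.
have [Hs _ _] := Hne; rewrite /= (last_default (a := e) (b := (0, 0)) Hs).
have Exy : y = x.
  case Elo: (lo Dv e) Hup => [||n] Hup.
  - by move: Elo; rewrite /lo; case: ifP.
  - by move: Hup; rewrite /up; case: (head (0, 0) s).1.
  - exact: carries_through Elo Hup Hy Hax.
subst y; split=> //; first exact: nonempty_in_edges_cons.
exact: ltn_trans (time_up_lt_lo He) Htm.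
Qed.

Definition timing (d0 d1 : bool) v v' : Prop :=
  if d0 then (if d1 then is_true (time v < time v') else time v < TT /\ time v' < TT)
  else (if d1 then TT.+1 < time v /\ TT.+1 < time v' else is_true (time v' < time v)).

(* [d0] ([d1]) tells whether the first (last) edge is walked downwards; the
   carried atom flips exactly when the direction does. *)
Definition ai_shape v s v' := exists (d0 d1 : bool) x,
  [/\ nonempty_in_edges s,
      (if d0 then up (head (0, 0) s) = v else lo Dv (head (0, 0) s) = v),
      (if d1 then lo Dv (last (0, 0) s) = v' else up (last (0, 0) s) = v'),
      carries (head (0, 0) s) x /\ carries (last (0, 0) s) (if d0 == d1 then x else bar x)
    & timing d0 d1 v v'].

Lemma ends_cat s1 e1 e2 s2 :
  [/\ 0 < size (rcons s1 e1 ++ e2 :: s2),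
      head (0, 0) (rcons s1 e1 ++ e2 :: s2) = head (0, 0) (rcons s1 e1)
    & last (0, 0) (rcons s1 e1 ++ e2 :: s2) = last (0, 0) (e2 :: s2)].
Proof. by rewrite size_cat addnS last_cat; case: s1. Qed.

Lemma ai_shape_turn_int v s1 e1 n e2 s2 v' :
  nth None L n = Some (VInt, [::]) -> e1 <> e2 ->
  ai_shape v (rcons s1 e1) (NV n) -> ai_shape (NV n) (e2 :: s2) v' ->
  ai_shape v (rcons s1 e1 ++ e2 :: s2) v'.
Proof.
move=> Hi Hne [d0 [d1 [x [[_ Hh1 Hl1] Hv1 Hw1 [Ha1 Hb1] Ht1]]]].
move=> [d0' [d1' [x' [[_ Hh2 Hl2] Hv2 Hw2 [Ha2 Hb2] Ht2]]]].
have n_after := ints_after Hi.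
have [Es Eh El] := ends_cat (s1 := s1) (e1 := e1) (e2 := e2) (s2 := s2).
rewrite last_rcons in Hl1 Hw1 Hb1; rewrite /= in Hh2 Hv2 Ha2.
case: d1 Hw1 Hb1 Ht1 => Hw1 Hb1 Ht1; first by case: (lo_int_absurd Hi Hw1).
case: d0' Hv2 Ha2 Hb2 Ht2 => Hv2 Ha2 Hb2 Ht2; last by case: (lo_int_absurd Hi Hv2).
have Ex' := up_int_dual Hi Hw1 Hv2 Hne Hb1 Ha2.
case: d0 Hv1 Ha1 Hb1 Ht1 Ex' => Hv1 Ha1 Hb1 Ht1 Ex' /=; first by case: Ht1 => /= *; lia.
case: d1' Hw2 Hb2 Ht2 => Hw2 Hb2 Ht2 /=; last by case: Ht2 => /= *; lia.
exists false, true, x; rewrite /nonempty_in_edges Eh El; subst x'; rewrite /= in Hb2.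
by split=> //; rewrite /timing /= in Ht1 Ht2 *; lia.
Qed.

Lemma ai_shape_turn_cut v s1 e1 n ups e2 s2 v' :
  nth None L n = Some (VCut, ups) -> e1 <> e2 ->
  ai_shape v (rcons s1 e1) (NV n) -> ai_shape (NV n) (e2 :: s2) v' ->
  ai_shape v (rcons s1 e1 ++ e2 :: s2) v'.
Proof.
move=> Hc Hne [d0 [d1 [x [[_ Hh1 Hl1] Hv1 Hw1 [Ha1 Hb1] Ht1]]]].
move=> [d0' [d1' [x' [[_ Hh2 Hl2] Hv2 Hw2 [Ha2 Hb2] Ht2]]]].
have n_before := cuts_before Hc.
have [Es Eh El] := ends_cat (s1 := s1) (e1 := e1) (e2 := e2) (s2 := s2).
rewrite last_rcons in Hl1 Hw1 Hb1; rewrite /= in Hh2 Hv2 Ha2.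
case: d1 Hw1 Hb1 Ht1 => Hw1 Hb1 Ht1; last by case: (up_cut_absurd Hc Hw1 Hl1).
case: d0' Hv2 Ha2 Hb2 Ht2 => Hv2 Ha2 Hb2 Ht2; first by case: (up_cut_absurd Hc Hv2 Hh2).
have Ex' := lo_cut_dual Hc Hw1 Hv2 Hne Hb1 Ha2.
case: d0 Hv1 Ha1 Hb1 Ht1 Ex' => Hv1 Ha1 Hb1 Ht1 Ex' /=; last by case: Ht1 => /= *; lia.
case: d1' Hw2 Hb2 Ht2 => Hw2 Hb2 Ht2 /=; first by case: Ht2 => /= *; lia.
exists true, false, x; rewrite /nonempty_in_edges Eh El; subst x'; rewrite /= in Hb2.
by split=> //; rewrite /timing /= in Ht1 Ht2 *; lia.
Qed.

Lemma aipath_shape v s v' : aipath Dv v s v' -> ai_shape v s v'.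
Proof.
elim=> {v s v'} [v s v' /dpath_shape|v s v' /dpath_shape|
                 v s1 e1 w e2 s2 v' _ IH1 _ IH2 Hw Hne].
- by move=> [x [Hne Hup Hlo Hx Ht]]; exists true, true, x.
- move=> [x [[Hs Hh Hl] Hup Hlo Hx Ht]]; exists false, false, x.
  by rewrite /nonempty_in_edges head_rev last_rev size_rev /=; split=> //; case: Hx.
case: w Hw IH1 IH2 => [[]|[]|n [Hi|[ups Hc]]] IH1 IH2.
  exact: ai_shape_turn_int Hi Hne IH1 IH2.
exact: ai_shape_turn_cut Hc Hne IH1 IH2.
Qed.

Lemma cycle_free_cuts_before_ints : cycle_free Dv.
Proof.
move=> s [n [/aipath_shape [d0 [d1 [x [_ Hv Hw [Ha Hb] Ht]]]] _]].
case: d0 d1 Hv Hw Hb Ht => [] [] Hv Hw Hb Ht; rewrite /timing /= in Ht.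
- lia.
- by have := ints_after (up_dual_int Hv Hw Ha Hb); case: Ht => /= *; lia.
- by have [ups /cuts_before] := lo_dual_cut Hv Hw Ha Hb; case: Ht => /= *; lia.
- lia.
Qed.

End Flow.

Section Assembly.
Variables (A : Type) (bar : A -> A).

Fixpoint label_premiss (k : nat) (x : formula A) : lformula A * nat :=
  match x with
  | FF => (FF, k) | FT => (FT, k) | FAt a => (FAt (a, (0, k)), k.+1)
  | FOr x y =>
      let r1 := label_premiss k x in let r2 := label_premiss r1.2 y in (FOr r1.1 r2.1, r2.2)
  | FAnd x y =>
      let r1 := label_premiss k x in let r2 := label_premiss r1.2 y in (FAnd r1.1 r2.1, r2.2)
  end.

Lemma label_premiss_spec x k :
  [/\ erase (label_premiss k x).1 = x, (label_premiss k x).2 = k + size (leaves x) &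
      map snd (leaves (label_premiss k x).1) = [seq (0, j) | j <- iota k (size (leaves x))]].
Proof.
elim: x k => [|||x IHx y IHy|x IHx y IHy] k /=; try by split; rewrite ?addn0 ?addn1.
all: have [E1 S1 M1] := IHx k; have [E2 S2 M2] := IHy (label_premiss k x).2.
all: split; [by move: E1 E2; rewrite /erase /= => -> -> | by rewrite S2 S1 size_cat addnA |].
all: by rewrite /= map_cat M1 M2 S1 size_cat iotaD map_cat.
Qed.

Lemma derivation_of_derivable ok1 ok2 x z y :
  derivable bar ok1 x z -> derivable bar ok2 z y -> exists fs l1 l2,
  [/\ is_derivation bar (Deriv fs (l1 ++ l2)) x y, all (allowed ok1) l1 & all (allowed ok2) l2].
Proof.
move=> [D1] [D2]; set p := (label_premiss 0 x).1.
have [Ep _ Mp] := label_premiss_spec (x := x) (k := 0).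
have [q [fs1 [l1 [C1 Eq O1]]]] := D1 0 p Ep.
have [r [fs2 [l2 [C2 Er O2]]]] := D2 (0 + size l1) q Eq.
have [Hsz Hhd Hlt Hst] := chain_spec (chain_cat C1 C2).
exists (fs1 ++ behead fs2), l1, l2; split=> //; split=> //=.
rewrite Hhd Mp -(size_map snd (leaves p)) Mp size_map size_iota Hlt.
by split=> // k; apply: Hst.
Qed.

Lemma cycle_free_two_phases
    (bar_inv : forall a, bar (bar a) = a) (bar_neq : forall a, bar a <> a) fs l1 l2 x y :
  is_derivation bar (Deriv fs (l1 ++ l2)) x y ->
  all (allowed no_int) l1 -> all (allowed no_cut) l2 -> cycle_free (Deriv fs (l1 ++ l2)).
Proof.
move=> [Hsz [Hpre [Hst _]]] O1 O2.
apply: (cycle_free_cuts_before_ints (TT := size l1) bar_inv bar_neq Hsz Hpre Hst)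
  => /= [j ups|j]; rewrite nth_cat; case: ltnP => // Hj Hn.
  have Hk : j - size l1 < size l2.
    by rewrite ltnNge; apply/negP => /(nth_default None); rewrite Hn.
  by have := all_nthP None O2 _ Hk; rewrite Hn.
by have := all_nthP None O1 _ Hj; rewrite Hn.
Qed.

Lemma cycle_free_uninhabited (D : derivation A) : ~ inhabited A -> cycle_free D.
Proof.
move=> NA s [n [Hp _]].
have [e He] : exists e, e \in edges D.
  by elim: Hp => // [? ? ? [e He|e ? ? He _]|? ? ? [e He|e ? ? He _]]; exists e.
have [j _ /map_In_inv [q _ _]] := mem_flatten_map_nth (d := FF) He.
exact: NA (inhabits q.1).
Qed.

End Assembly.

Theorem theorem5p17 (A : Type) (bar : A -> A)
    (bar_inv : forall a, bar (bar a) = a) (bar_neq : forall a, bar a <> a)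
    (D : derivation A) (x y : formula A) :
  is_derivation bar D x y ->
  exists D' : derivation A, is_derivation bar D' x y /\ cycle_free D'.
Proof.
move=> HD; case: (classic (inhabited A)) => [[a0]|NA]; last first.
  by exists D; split=> //; apply: cycle_free_uninhabited.
have valid := derivation_sound HD.
have [z [D1 D2]] := valid_two_phase_derivable a0 bar_inv bar_neq valid.
have [fs [l1 [l2 [HD' O1 O2]]]] := derivation_of_derivable D1 D2.
by exists (Deriv fs (l1 ++ l2)); split=> //; apply: cycle_free_two_phases HD' O1 O2.
Qed.
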